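(* Let $0<p\le 1$, $\epsilon>0$, $m\ge1$, let $\mathcal{C}\subseteq\mathbb{R}^m$ be a nonempty closed convex set, and let $f_p(\boldsymbol{z};\epsilon)=\sum_{i=1}^{m}(z_i^2+\epsilon^2)^{p/2}$. Consider the problem $\mathscr{P}_{\mathrm{sm}}(\epsilon)$: minimize $f_p(\boldsymbol{z};\epsilon)$ over $\boldsymbol{z}\in\mathcal{C}$. Generate a sequence by the iterative reweighted-$\ell_2$ algorithm: start with $\boldsymbol{\omega}^{[0]}=(1,\dots,1)$, and for $n=0,1,2,\dots$ set $$\boldsymbol{z}^{[n+1]}=\arg\min_{\boldsymbol{z}\in\mathcal{C}}\sum_{i=1}^{m}\omega_i^{[n]}z_i^2,\qquad \omega_i^{[n+1]}=\frac{p}{2}\left[\left(z_i^{[n+1]}\right)^2+\epsilon^2\right]^{\frac{p}{2}-1},\ i=1,\dots,m.$$ Then every limit point $\bar{\boldsymbol{z}}$ of $\{\boldsymbol{z}^{[n]}\}_{n\ge1}$ is a KKT point of $\mathscr{P}_{\mathrm{sm}}(\epsilon)$, and $f_p(\boldsymbol{z}^{[n]};\epsilon)$ converges monotonically (nonincreasingly) to $f_p(\boldsymbol{z}^{\star};\epsilon)$ for some KKT point $\boldsymbol{z}^{\star}$ of $\mathscr{P}_{\mathrm{sm}}(\epsilon)$.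
   Context: The normal cone of a convex set $\mathcal{C}$ at $\boldsymbol{z}\in\mathcal{C}$ is $\mathcal{N}_{\mathcal{C}}(\boldsymbol{z})=\{\boldsymbol{s}:\langle\boldsymbol{s},\boldsymbol{x}-\boldsymbol{z}\rangle\le0\ \forall\boldsymbol{x}\in\mathcal{C}\}$. A KKT point of $\mathscr{P}_{\mathrm{sm}}(\epsilon)$ is a point $\boldsymbol{z}\in\mathcal{C}$ with $0\in\nabla_{\boldsymbol{z}}f_p(\boldsymbol{z};\epsilon)+\mathcal{N}_{\mathcal{C}}(\boldsymbol{z})$. *)

From HB Require Import structures.
From mathcomp Require Import all_boot all_order all_algebra.
From mathcomp Require Import all_classical all_reals all_analysis.
Set Implicit Arguments. Unset Strict Implicit. Unset Printing Implicit Defensive.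
Import Order.TTheory GRing.Theory Num.Theory.
Import numFieldNormedType.Exports.
Local Open Scope classical_set_scope.
Local Open Scope ring_scope.

Definition convex_rV (R : realType) (m : nat) (C : set 'rV[R]_m) : Prop :=
  forall x y : 'rV[R]_m, forall t : R, C x -> C y -> 0 <= t -> t <= 1 ->
    C (t *: x + (1 - t) *: y).

Definition inner (R : realType) (m : nat) (u v : 'rV[R]_m) : R :=
  \sum_(i < m) u ord0 i * v ord0 i.

Definition fp (R : realType) (m : nat) (p eps : R) (z : 'rV[R]_m) : R :=
  \sum_(i < m) powR (z ord0 i ^+ 2 + eps ^+ 2) (p / 2).

Definition evec (R : realType) (m : nat) (i : 'I_m) : 'rV[R]_m :=
  delta_mx ord0 i.

Definition grad (R : realType) (m : nat) (f : 'rV[R]_m -> R) (z : 'rV[R]_m)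
  : 'rV[R]_m :=
  \row_(i < m) (derive1 (fun t : R => f (z + t *: evec R i)) 0).

Definition normal_cone (R : realType) (m : nat) (C : set 'rV[R]_m)
  (z : 'rV[R]_m) : set 'rV[R]_m :=
  [set s | forall x, C x -> inner s (x - z) <= 0].

Definition KKT_point (R : realType) (m : nat) (p eps : R) (C : set 'rV[R]_m)
  (z : 'rV[R]_m) : Prop :=
  C z /\ exists s, normal_cone C z s /\ grad (fp p eps) z + s = 0.

Definition seq_limit_point (R : realType) (m : nat) (u : nat -> 'rV[R]_m)
  (zbar : 'rV[R]_m) : Prop :=
  forall e : R, 0 < e -> forall N : nat, exists n : nat,
    (1 <= n)%N /\ (N <= n)%N /\ `|u n - zbar| < e.

From HB Require Import structures.
From mathcomp Require Import all_boot all_order all_algebra.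
From mathcomp Require Import all_classical all_reals all_analysis.
From mathcomp Require Import ring lra.
Set Implicit Arguments. Unset Strict Implicit. Unset Printing Implicit Defensive.
Import Order.TTheory GRing.Theory Num.Theory.
Import numFieldNormedType.Exports.
Local Open Scope classical_set_scope.
Local Open Scope ring_scope.

(* IRLS is a majorization-minimization scheme. Since t |-> t^(p/2) is concave,
   its tangent at (z_i^[n])^2 + eps^2 majorizes f_p, and the weighted
   least-squares step minimizes this majorant; hence f_p decreases along the
   iterates by at least the weighted squared step length. So f_p(z^[n])
   converges, the iterates stay bounded, the weights stay bounded below, and
   consecutive iterates merge. Passing to the limit along a subsequence in the
   variational inequality characterizing each least-squares step gives the KKT
   condition at every cluster point, and a cluster point exists by compactness. *)

Lemma powR_le_tangent (R : realType) (q a b : R) :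
  0 < q -> q < 1 -> 0 < a -> 0 < b ->
  b `^ q <= a `^ q + q * a `^ (q - 1) * (b - a).
Proof.
move=> q_gt0 q_lt1 a_gt0 b_gt0; have q'_gt0 : 0 < 1 - q by rewrite subr_gt0.
have young : b `^ q * a `^ (1 - q) <= b * q + a * (1 - q).
  have := @conjugate_powR R (b `^ q) (a `^ (1 - q)) q^-1 (1 - q)^-1
    (powR_ge0 _ _) (powR_ge0 _ _) (eqbRL (invr_gt0 _) q_gt0)
    (eqbRL (invr_gt0 _) q'_gt0).
  rewrite !invrK addrC subrK => /(_ erefl).
  by rewrite -!powRrM !mulfV ?gt_eqF // (powRr1 (ltW b_gt0)) (powRr1 (ltW a_gt0)).
have a_inv : a `^ (1 - q) * a `^ (q - 1) = 1.
  rewrite -powRD; last by apply/implyP => _; rewrite gt_eqF.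
  by rewrite addrA subrK subrr powRr0.
have a_pow : a * a `^ (q - 1) = a `^ q by rewrite mulr_powRB1 // ltW.
have -> : a `^ q + q * a `^ (q - 1) * (b - a) = (b * q + a * (1 - q)) * a `^ (q - 1).
  by rewrite -a_pow; ring.
have := ler_wpM2r (ltW (powR_gt0 (q - 1) a_gt0)) young.
by rewrite -mulrA a_inv mulr1.
Qed.

Lemma ge0_affine_near0 (R : realFieldType) (a b : R) :
  (forall t, 0 < t -> t <= 1 -> 0 <= a + t * b) -> 0 <= a.
Proof.
move=> affine_ge0; rewrite leNgt; apply/negP => a_lt0.
have [b_le0|b_gt0] := lerP b 0; first by have := affine_ge0 1 ltr01 (lexx 1); lra.
pose t := Num.min 1 (- a / (2 * b)).
have t_gt0 : 0 < t by rewrite lt_min ltr01 divr_gt0 ?mulr_gt0 // oppr_gt0.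
have tb : t * (2 * b) <= - a.
  by rewrite -ler_pdivlMr ?mulr_gt0 // ge_min lexx orbT.
have t_le1 : t <= 1 by rewrite ge_min lexx.
by have := affine_ge0 t t_gt0 t_le1; lra.
Qed.

Definition wsqnorm (R : realType) (m : nat) (v x : 'rV[R]_m) : R :=
  \sum_(i < m) v ord0 i * x ord0 i ^+ 2.

Lemma wsqnorm_ge0 (R : realType) (m : nat) (v x : 'rV[R]_m) :
  (forall i, 0 <= v ord0 i) -> 0 <= wsqnorm v x.
Proof. by move=> v_ge0; apply: sumr_ge0 => i _; rewrite mulr_ge0 ?sqr_ge0. Qed.

Lemma wsqnorm_ge_coord (R : realType) (m : nat) (v x : 'rV[R]_m) i :
  (forall j, 0 <= v ord0 j) -> v ord0 i * x ord0 i ^+ 2 <= wsqnorm v x.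
Proof.
move=> v_ge0; rewrite /wsqnorm (bigD1 i) //= lerDl.
by apply: sumr_ge0 => j _; rewrite mulr_ge0 ?sqr_ge0.
Qed.

Section Weighted_least_squares.
Variables (R : realType) (m : nat) (C : set 'rV[R]_m) (v x : 'rV[R]_m).
Hypotheses (convC : convex_rV C) (Cx : C x).
Hypothesis x_min : forall y, C y -> wsqnorm v x <= wsqnorm v y.

Lemma wsqnorm_min_vi y : C y ->
  0 <= \sum_(i < m) v ord0 i * x ord0 i * (y ord0 i - x ord0 i).
Proof.
move=> Cy; rewrite -(pmulr_rge0 _ (ltr0n _ 2)).
apply: (@ge0_affine_near0 _ _
  (\sum_(i < m) v ord0 i * (y ord0 i - x ord0 i) ^+ 2)) => t t_gt0 t_le1.
have := x_min (convC Cy Cx (ltW t_gt0) t_le1).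
rewrite [X in _ <= X](eq_bigr (fun i => v ord0 i * x ord0 i ^+ 2 + t * (2 *
    (v ord0 i * x ord0 i * (y ord0 i - x ord0 i)) +
    t * (v ord0 i * (y ord0 i - x ord0 i) ^+ 2)))); last first.
  by move=> i _; rewrite !mxE; ring.
rewrite big_split /= -mulr_sumr big_split /= -!mulr_sumr.
by rewrite lerDl pmulr_rge0.
Qed.

Lemma wsqnorm_min_gap y : C y ->
  wsqnorm v (y - x) <= wsqnorm v y - wsqnorm v x.
Proof.
move=> Cy; rewrite /wsqnorm -sumrB.
rewrite [X in _ <= X](eq_bigr (fun i => v ord0 i * (y - x) ord0 i ^+ 2 +
    2 * (v ord0 i * x ord0 i * (y ord0 i - x ord0 i)))); last first.
  by move=> i _; rewrite !mxE; ring.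
by rewrite big_split /= -mulr_sumr lerDl mulr_ge0 // wsqnorm_min_vi.
Qed.

End Weighted_least_squares.

Definition irls_weight (R : realType) (p eps x : R) : R :=
  p / 2 * powR (x ^+ 2 + eps ^+ 2) (p / 2 - 1).

Definition irls_weights (R : realType) (m : nat) (p eps : R) (z : 'rV[R]_m)
  : 'rV[R]_m := \row_i irls_weight p eps (z ord0 i).

Lemma sqrD_gt0 (R : realType) (eps x : R) : 0 < eps -> 0 < x ^+ 2 + eps ^+ 2.
Proof. by move=> eps_gt0; rewrite ltr_wpDl ?sqr_ge0 // exprn_gt0. Qed.

Lemma irls_weight_ge0 (R : realType) (p eps x : R) :
  0 <= p -> 0 <= irls_weight p eps x.
Proof. by move=> p_ge0; rewrite mulr_ge0 ?divr_ge0 ?powR_ge0. Qed.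

Lemma irls_weight_ge (R : realType) (p eps x M : R) :
  0 < p -> p < 2 -> 0 < eps -> x ^+ 2 + eps ^+ 2 <= M ->
  p / 2 * powR M (p / 2 - 1) <= irls_weight p eps x.
Proof.
move=> p_gt0 p_lt2 eps_gt0 xM; have x_gt0 := sqrD_gt0 x eps_gt0.
have M_gt0 := lt_le_trans x_gt0 xM.
apply: ler_wpM2l; first by rewrite divr_ge0 ?ltW.
have -> : p / 2 - 1 = - (1 - p / 2) by ring.
rewrite !powRN lef_pV2 ?posrE ?powR_gt0 //.
have q_le1 : p / 2 <= 1 by rewrite ler_pdivrMr //; lra.
by apply: ge0_ler_powR; rewrite ?nnegrE ?subr_ge0 // ltW.
Qed.

Lemma fp_le_majorant (R : realType) (m : nat) (p eps : R) (x y : 'rV[R]_m) :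
  0 < p -> p < 2 -> 0 < eps ->
  fp p eps y <= fp p eps x +
    (wsqnorm (irls_weights p eps x) y - wsqnorm (irls_weights p eps x) x).
Proof.
move=> p_gt0 p_lt2 eps_gt0.
rewrite /fp /wsqnorm -sumrB -big_split /=; apply: ler_sum => i _.
rewrite !mxE /irls_weight.
apply: le_trans (powR_le_tangent _ _ (sqrD_gt0 (x ord0 i) eps_gt0) (sqrD_gt0 _ eps_gt0)) _.
- by rewrite divr_gt0.
- by rewrite ltr_pdivrMr //; lra.
by rewrite le_eqVlt; apply/orP; left; apply/eqP; ring.
Qed.

Lemma is_derive_sqr_affine (R : realType) (a c e x : R) :
  is_derive x 1 (fun t : R => (a + t * c) ^+ 2 + e) (2 * (a + x * c) * c).
Proof.
have -> : (fun t : R => (a + t * c) ^+ 2 + e) = (cst a + c \*: id) ^+ 2 + cst e.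
  by apply/funext => t /=; rewrite !fctE /= [c *: t]mulrC.
apply: is_derive_eq.
rewrite !fctE /= expr1 add0r addr0.
change (2 * (a + c * x) * (c * 1) = 2 * (a + x * c) * c).
by ring.
Qed.

Lemma grad_fp (R : realType) (m : nat) (p eps : R) (z : 'rV[R]_m) i :
  0 < eps -> grad (fp p eps) z ord0 i = 2 * (irls_weight p eps (z ord0 i) * z ord0 i).
Proof.
move=> eps_gt0.
have e_i j : evec R i ord0 j = (j == i)%:R by rewrite /evec mxE eqxx.
rewrite /grad mxE.
pose g j t := powR ((z ord0 j + t * evec R i ord0 j) ^+ 2 + eps ^+ 2) (p / 2).
have -> : (fun t => fp p eps (z + t *: evec R i)) = \sum_(j < m) g j.
  apply/funext => t; rewrite /fp fct_sumE; apply: eq_bigr => j _.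
  by rewrite [(z + _) ord0 j]mxE mxE.
have dg j : is_derive (0 : R) 1 (g j) (p / 2 * powR ((z ord0 j + 0 * evec R i ord0 j) ^+ 2
    + eps ^+ 2) (p / 2 - 1) * (2 * (z ord0 j + 0 * evec R i ord0 j) * evec R i ord0 j)).
  have pos : 0 < (z ord0 j + 0 * evec R i ord0 j) ^+ 2 + eps ^+ 2.
    by rewrite mul0r addr0 sqrD_gt0.
  exact: (is_derive1_comp
    (g := fun t => (z ord0 j + t * evec R i ord0 j) ^+ 2 + eps ^+ 2)
    (is_derive1_powR (p / 2) pos) (is_derive_sqr_affine _ _ _ _)).
rewrite derive1E; have [_ ->] := is_derive_sum dg.
rewrite (bigD1 i) //= big1 ?addr0; last first.
  by move=> j ji; rewrite e_i (negbTE ji) !mulr0.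
rewrite e_i eqxx mul0r addr0 mulr1 /irls_weight.
by move: (_ `^ _) => P; ring.
Qed.

Lemma KKT_point_of_vi (R : realType) (m : nat) (p eps : R) (C : set 'rV[R]_m)
  (zb : 'rV[R]_m) : 0 < eps -> C zb ->
  (forall y, C y -> 0 <= \sum_(i < m)
     irls_weight p eps (zb ord0 i) * zb ord0 i * (y ord0 i - zb ord0 i)) ->
  KKT_point p eps C zb.
Proof.
move=> eps_gt0 Czb vi; split => //; exists (- grad (fp p eps) zb).
split; last by rewrite addrN.
move=> y Cy; rewrite /inner.
have -> : \sum_(i < m) (- grad (fp p eps) zb) ord0 i * (y - zb) ord0 i = - (2 *
    \sum_(i < m) irls_weight p eps (zb ord0 i) * zb ord0 i * (y ord0 i - zb ord0 i)).
  rewrite mulr_sumr -sumrN; apply: eq_bigr => i _.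
  by rewrite [X in X * _]mxE grad_fp // !mxE; ring.
by rewrite oppr_le0 mulr_ge0 ?vi.
Qed.

Lemma normr_rV_coord_le (R : realType) (m : nat) (A : 'rV[R]_m) i :
  `|A ord0 i| <= `|A|.
Proof.
have /mapP[j j_in ->] : `|A ord0 i| \in [seq `|A x.1 x.2| | x : 'I_1 * 'I_m].
  by apply/mapP; exists (ord0, i) => //=; rewrite mem_enum.
by rewrite [leRHS]/Num.norm /= mx_normrE; apply/bigmax_geP; right => /=; exists j.
Qed.

Lemma cvgn_rV_coord (R : realType) (m : nat) (u : nat -> 'rV[R]_m) (a : 'rV[R]_m) i :
  u k @[k --> \oo] --> a -> u k ord0 i @[k --> \oo] --> a ord0 i.
Proof.
move/cvgrPdist_lt => ua; apply/cvgrPdist_lt => e e_gt0.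
apply: filterS (ua e e_gt0) => k; apply: le_lt_trans.
by have := normr_rV_coord_le (a - u k) i; rewrite !mxE.
Qed.

Lemma cvgn_sqrD (R : realType) (a : nat -> R) (x e : R) :
  a n @[n --> \oo] --> x -> a n ^+ 2 + e @[n --> \oo] --> x ^+ 2 + e.
Proof.
move=> ax; apply: cvgD; last exact: cvg_cst.
by under eq_fun do rewrite expr2; rewrite expr2; exact: cvgM.
Qed.

Lemma powR_cvgn (R : realType) (q x : R) (u : nat -> R) : 0 < x ->
  u n @[n --> \oo] --> x -> powR (u n) q @[n --> \oo] --> powR x q.
Proof.
move=> x_gt0 ux; have powR_cont : {for x, continuous (fun y : R => powR y q)}.
  apply: differentiable_continuous; apply/derivable1_diffP.
  by apply: derivable_powR; rewrite in_itv /= x_gt0.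
exact: cvg_comp ux powR_cont.
Qed.

Lemma irls_weight_cvgn (R : realType) (p eps x : R) (a : nat -> R) : 0 < eps ->
  a n @[n --> \oo] --> x -> irls_weight p eps (a n) @[n --> \oo] --> irls_weight p eps x.
Proof.
move=> eps_gt0 ax; apply: cvgM; first exact: cvg_cst.
by apply: powR_cvgn (sqrD_gt0 _ eps_gt0) _; apply: cvgn_sqrD.
Qed.

Lemma fp_cvgn (R : realType) (m : nat) (p eps : R) (u : nat -> 'rV[R]_m) (a : 'rV[R]_m) :
  0 < eps -> u k @[k --> \oo] --> a -> fp p eps (u k) @[k --> \oo] --> fp p eps a.
Proof.
move=> eps_gt0 ua; apply: cvg_big => [|i _]; first exact: add_continuous.
by apply: powR_cvgn (sqrD_gt0 _ eps_gt0) _; apply/cvgn_sqrD/cvgn_rV_coord.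
Qed.

Lemma sqr_cvgn0 (R : realType) (a : nat -> R) :
  a n ^+ 2 @[n --> \oo] --> 0 -> a n @[n --> \oo] --> 0.
Proof.
move/cvgrPdist_lt => a2 ; apply/cvgrPdist_lt => e e_gt0.
apply: filterS (a2 _ (exprn_gt0 2 e_gt0)) => n.
rewrite !sub0r !normrN ger0_norm ?sqr_ge0 // -[a n ^+ 2]real_normK ?num_real //.
by rewrite ltr_pXn2r ?nnegrE ?normr_ge0 ?(ltW e_gt0).
Qed.

Lemma cvgn_subseq (T : topologicalType) (v : nat -> T) (l : T) (s : nat -> nat) :
  (forall k, (k <= s k)%N) -> v n @[n --> \oo] --> l -> v (s k) @[k --> \oo] --> l.
Proof.
move=> s_ge vl; apply: cvg_comp vl => A [N _ sA].
by exists N => // k /= Nk; apply: sA; exact: leq_trans Nk (s_ge k).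
Qed.

Lemma seq_limit_point_subseq (R : realType) (m : nat) (z : nat -> 'rV[R]_m) zb :
  seq_limit_point z zb -> exists s : nat -> nat,
    (forall k, (1 <= s k)%N /\ (k <= s k)%N) /\ z (s k) @[k --> \oo] --> zb.
Proof.
move=> zb_lim.
have near_k k : exists n, ((1 <= n)%N /\ (k <= n)%N) /\ `|z n - zb| < k.+1%:R^-1.
  have k_gt0 : 0 < k.+1%:R^-1 :> R by rewrite invr_gt0.
  by have [n [n1 [kn zn]]] := zb_lim _ k_gt0 k; exists n.
have [s s_spec] := choice near_k; exists s; split; first by move=> k; case: (s_spec k).
apply/cvgrPdist_lt => e e_gt0; near=> k.
rewrite distrC; apply: lt_trans (proj2 (s_spec k)) _.
near: k; exact: near_infty_natSinv_lt (PosNum e_gt0).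
Unshelve. all: by end_near.
Qed.

Lemma seq_limit_point_of_bounded (R : realType) (m : nat) (z : nat -> 'rV[R]_m) (B : R) :
  (forall n i, (1 <= n)%N -> `|z n ord0 i| <= B) -> exists zc, seq_limit_point z zc.
Proof.
move=> zB; pose K := [set v : 'rV[R]_m | forall i, v ord0 i \in `[- B, B]].
have K_compact : compact K.
  apply: (@rV_compact _ _ (fun=> `[- B, B]%classic)) => _.
  exact: segment_compact.
have zK : (z @ \oo) K.
  by exists 1%N => // n /= n1 i; rewrite in_itv /= -ler_norml zB.
have [zc [_ zc_cluster]] := K_compact _ _ zK; exists zc => e e_gt0 N.
have [|y [[n Nn <-] zn]] := zc_cluster (z @` [set n | (maxn N 1 <= n)%N])
    (ball zc e) _ (nbhsx_ballx zc e e_gt0).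
  by exists (maxn N 1) => // n /= Nn; exists n.
move: Nn; rewrite /= geq_max => /andP[Nn n1]; exists n; split => //; split => //.
by move: zn; rewrite -ball_normE /= distrC.
Qed.

Lemma fp_ge0 (R : realType) (m : nat) (p eps : R) (x : 'rV[R]_m) : 0 <= fp p eps x.
Proof. by apply: sumr_ge0 => i _; exact: powR_ge0. Qed.

Lemma sqrD_le_fp (R : realType) (m : nat) (p eps : R) (x : 'rV[R]_m) i :
  0 < p -> 0 < eps -> x ord0 i ^+ 2 + eps ^+ 2 <= powR (fp p eps x) (p / 2)^-1.
Proof.
move=> p_gt0 eps_gt0; have q_gt0 : 0 < p / 2 by rewrite divr_gt0.
have -> : x ord0 i ^+ 2 + eps ^+ 2 =
    powR (powR (x ord0 i ^+ 2 + eps ^+ 2) (p / 2)) (p / 2)^-1.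
  by rewrite -powRrM mulfV ?gt_eqF // powRr1 // ltW // sqrD_gt0.
apply: ge0_ler_powR; rewrite ?nnegrE ?invr_ge0 ?powR_ge0 ?fp_ge0 ?(ltW q_gt0) //.
by rewrite /fp (bigD1 i) //= lerDl; apply: sumr_ge0 => j _; exact: powR_ge0.
Qed.

Section Irls.
Variables (R : realType) (m : nat) (p eps : R) (C : set 'rV[R]_m).
Variables (z w : nat -> 'rV[R]_m).
Hypotheses (p_gt0 : 0 < p) (p_lt2 : p < 2) (eps_gt0 : 0 < eps).
Hypotheses (closedC : closed C) (convC : convex_rV C).
Hypothesis z_min : forall n, C (z n.+1) /\
  forall y, C y -> wsqnorm (w n) (z n.+1) <= wsqnorm (w n) y.
Hypothesis w_next : forall n i, w n.+1 ord0 i = irls_weight p eps (z n.+1 ord0 i).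

Lemma irls_weightsE n : (1 <= n)%N -> w n = irls_weights p eps (z n).
Proof. by case: n => // n _; apply/rowP => i; rewrite mxE w_next. Qed.

Lemma irls_weights_ge0 n i : (1 <= n)%N -> 0 <= w n ord0 i.
Proof. by move=> n1; rewrite irls_weightsE // mxE irls_weight_ge0 ?ltW. Qed.

Lemma irls_iter_in n : (1 <= n)%N -> C (z n).
Proof. by case: n => // n _; case: (z_min n). Qed.

Lemma fp_irls_descent n : (1 <= n)%N ->
  fp p eps (z n.+1) + wsqnorm (w n) (z n - z n.+1) <= fp p eps (z n).
Proof.
move=> n1; have [Cz1 zmin] := z_min n.
have gap := wsqnorm_min_gap convC Cz1 zmin (irls_iter_in n1).
have := @fp_le_majorant _ _ p eps (z n) (z n.+1) p_gt0 p_lt2 eps_gt0.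
by rewrite -irls_weightsE //; lra.
Qed.

Lemma fp_irls_nonincr n : (1 <= n)%N -> fp p eps (z n.+1) <= fp p eps (z n).
Proof.
move=> n1; apply: le_trans (fp_irls_descent n1).
by rewrite lerDl wsqnorm_ge0 // => i; exact: irls_weights_ge0.
Qed.

Lemma fp_irls_le n k : (1 <= n)%N -> (n <= k)%N -> fp p eps (z k) <= fp p eps (z n).
Proof.
move=> n1; elim: k => [|k IH] nk; first by move: (leq_trans n1 nk).
move: nk; rewrite leq_eqVlt => /orP[/eqP <- //|nk].
exact: le_trans (fp_irls_nonincr (leq_trans n1 nk)) (IH nk).
Qed.

Lemma fp_irls_is_cvg : cvgn (fun n => fp p eps (z n)).
Proof.
apply: (@near_nonincreasing_is_cvgn _ _ 0).
  by exists 1%N => // n n1 k nk; exact: fp_irls_le.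
by apply: nearW => n; exact: fp_ge0.
Qed.

(* The summand eps^2 keeps the bound positive even when m = 0. *)
Lemma irls_sqrD_bounded : exists2 M, 0 < M &
  forall n i, (1 <= n)%N -> z n ord0 i ^+ 2 + eps ^+ 2 <= M.
Proof.
exists (powR (fp p eps (z 1%N)) (p / 2)^-1 + eps ^+ 2) => [|n i n1].
  by rewrite ltr_wpDl ?powR_ge0 // exprn_gt0.
apply: le_trans (sqrD_le_fp (z n) i p_gt0 eps_gt0) _.
apply: le_trans (_ : _ <= powR (fp p eps (z 1%N)) (p / 2)^-1) _; last first.
  by rewrite lerDl sqr_ge0.
apply: ge0_ler_powR; rewrite ?nnegrE ?fp_ge0 ?invr_ge0 ?divr_ge0 ?(ltW p_gt0) //.
exact: fp_irls_le.
Qed.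

Lemma irls_bounded : exists B, forall n i, (1 <= n)%N -> `|z n ord0 i| <= B.
Proof.
have [M _ zM] := irls_sqrD_bounded; exists (M + 1) => n i n1.
have := zM n i n1; have := sqr_ge0 (z n ord0 i - 1).
have := sqr_ge0 (z n ord0 i + 1); have := sqr_ge0 eps.
by rewrite ler_norml => *; apply/andP; split; nra.
Qed.

Lemma irls_weights_lbound : exists2 c, 0 < c &
  forall n i, (1 <= n)%N -> c <= w n ord0 i.
Proof.
have [M M_gt0 zM] := irls_sqrD_bounded.
exists (p / 2 * powR M (p / 2 - 1)) => [|n i n1].
  by rewrite mulr_gt0 ?divr_gt0 ?powR_gt0.
by rewrite irls_weightsE // mxE; apply: irls_weight_ge => //; exact: zM.
Qed.

Lemma irls_step_cvg0 i : z n.+1 ord0 i - z n ord0 i @[n --> \oo] --> 0.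
Proof.
have [c c_gt0 wc] := irls_weights_lbound.
pose u n := fp p eps (z n).
have u_cvg : u n @[n --> \oo] --> limn u := fp_irls_is_cvg.
have u1_cvg : u n.+1 @[n --> \oo] --> limn u by rewrite (cvg_shiftS u).
have gap_cvg : (u n - u n.+1) / c @[n --> \oo] --> 0.
  rewrite -(mul0r c^-1) -(subrr (limn u)).
  by apply: cvgM; [exact: cvgB | exact: cvg_cst].
apply: sqr_cvgn0; apply: squeeze_cvgr (cvg_cst 0) gap_cvg.
exists 1%N => // n /= n1; rewrite sqr_ge0 /= ler_pdivlMr //.
have w_ge0 j : 0 <= w n ord0 j := irls_weights_ge0 j n1.
have := wsqnorm_ge_coord (z n - z n.+1) i w_ge0.
have := fp_irls_descent n1.
have := ler_wpM2r (sqr_ge0 (z n.+1 ord0 i - z n ord0 i)) (wc n i n1).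
by rewrite !mxE -[(z n.+1 ord0 i - _) ^+ 2]sqrrN opprB /u; lra.
Qed.

Lemma irls_limit_point_vi zb : seq_limit_point z zb -> forall y, C y ->
  0 <= \sum_(i < m) irls_weight p eps (zb ord0 i) * zb ord0 i * (y ord0 i - zb ord0 i).
Proof.
move=> /seq_limit_point_subseq [s [s_ge zs_cvg]] y Cy.
have zs i : z (s k) ord0 i @[k --> \oo] --> zb ord0 i := cvgn_rV_coord (i := i) zs_cvg.
have zs1 i : z (s k).+1 ord0 i @[k --> \oo] --> zb ord0 i.
  have -> : (fun k => z (s k).+1 ord0 i) =
      (fun k => z (s k) ord0 i + (z (s k).+1 ord0 i - z (s k) ord0 i)).
    by apply/funext => k; rewrite addrC subrK.
  rewrite -[zb ord0 i]addr0; apply: cvgD; first exact: zs.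
  exact: cvgn_subseq (fun k => proj2 (s_ge k)) (irls_step_cvg0 i).
have vi_cvg : \sum_(i < m) irls_weight p eps (z (s k) ord0 i) * z (s k).+1 ord0 i *
    (y ord0 i - z (s k).+1 ord0 i) @[k --> \oo] --> \sum_(i < m)
    irls_weight p eps (zb ord0 i) * zb ord0 i * (y ord0 i - zb ord0 i).
  apply: cvg_big => [|i _]; first exact: add_continuous.
  apply: cvgM; last by apply: cvgB; [exact: cvg_cst | exact: zs1].
  by apply: cvgM; [exact: irls_weight_cvgn | exact: zs1].
apply: (cvgr_to_ge vi_cvg).
apply: nearW => k; have [Cz1 zmin] := z_min (s k).
have := wsqnorm_min_vi convC Cz1 zmin Cy.
rewrite (irls_weightsE (proj1 (s_ge k))).
by under eq_bigr do rewrite mxE.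
Qed.

Lemma irls_limit_point_KKT zb : seq_limit_point z zb -> KKT_point p eps C zb.
Proof.
move=> zb_lim; apply: KKT_point_of_vi => //; last exact: irls_limit_point_vi.
have [s [s_ge zs_cvg]] := seq_limit_point_subseq zb_lim.
apply: (closed_cvg _ closedC _ _ zs_cvg).
by apply: nearW => k; apply/irls_iter_in/(proj1 (s_ge k)).
Qed.

Lemma fp_irls_cvg zb : seq_limit_point z zb ->
  fp p eps (z n) @[n --> \oo] --> fp p eps zb.
Proof.
move=> /seq_limit_point_subseq [s [s_ge zs_cvg]].
pose u n := fp p eps (z n).
have u_cvg : u n @[n --> \oo] --> limn u := fp_irls_is_cvg.
have <- : limn u = fp p eps zb.
  have us_cvg := cvgn_subseq (fun k => proj2 (s_ge k)) u_cvg.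
  have us_cvg' : u (s k) @[k --> \oo] --> fp p eps zb := fp_cvgn eps_gt0 zs_cvg.
  by apply: (cvg_unique _ us_cvg us_cvg'); exact: Rhausdorff.
exact: u_cvg.
Qed.

End Irls.

Theorem theorem2 (R : realType) (m : nat) (p eps : R) (C : set 'rV[R]_m)
  (z w : nat -> 'rV[R]_m) :
  0 < p -> p <= 1 -> 0 < eps -> (1 <= m)%N ->
  C !=set0 -> closed C -> convex_rV C ->
  w 0%N = const_mx 1 ->
  (forall n : nat, C (z n.+1) /\
     forall y, C y ->
       \sum_(i < m) w n ord0 i * z n.+1 ord0 i ^+ 2 <=
       \sum_(i < m) w n ord0 i * y ord0 i ^+ 2) ->
  (forall (n : nat) (i : 'I_m),
     w n.+1 ord0 i = p / 2 * powR (z n.+1 ord0 i ^+ 2 + eps ^+ 2) (p / 2 - 1)) ->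
  (forall zbar, seq_limit_point z zbar -> KKT_point p eps C zbar) /\
  (forall n : nat, (1 <= n)%N -> fp p eps (z n.+1) <= fp p eps (z n)) /\
  (exists zstar, KKT_point p eps C zstar /\
     (fun n => fp p eps (z n)) @ \oo --> fp p eps zstar).
Proof.
(* Only the iterates from n = 1 on matter. *)
move=> p_gt0 p_le1 eps_gt0 _ _ closedC convC _ z_min w_next.
have p_lt2 : p < 2 by lra.
have KKT := irls_limit_point_KKT p_gt0 p_lt2 eps_gt0 closedC convC z_min w_next.
have [B zB] := irls_bounded p_gt0 p_lt2 eps_gt0 convC z_min w_next.
have [zc zc_lim] := seq_limit_point_of_bounded zB.
split=> //; split; first exact: fp_irls_nonincr p_gt0 p_lt2 eps_gt0 convC z_min w_next.
exists zc; split; first exact: KKT.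
exact: (fp_irls_cvg p_gt0 p_lt2 eps_gt0 convC z_min w_next zc_lim).
Qed.
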